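(* The action of $O_d(\mathbb R)$ on $U_d(\mathbb R)\subset\mathbb R^d\oplus\mathfrak{so}(d,\mathbb R)$ is free.
   Context: Fix $d\ge2$. $V=\mathbb C^d\oplus\mathfrak{so}(d,\mathbb C)$, elements $(v,M)$ with $v=(c_1,\dots,c_d)^\top$, $M$ skew-symmetric, $M_{ij}=c_{ij}=-M_{ji}$ for $i<j$; $O_d(\mathbb K)=\{A\in\mathbb K^{d\times d}:AA^\top=I\}$ acts by $A\cdot(v,M)=(Av,AMA^\top)$. $L^{(1)}=\{c_1=\dots=c_{d-1}=0\}$, $L^{(i)}=\{(v,M)\in L^{(i-1)}:c_{k(d-i+2)}=0,\ 1\le k\le d-i\}$ for $2\le i\le d-1$. $f_1=\sum c_i^2$; for $2\le i\le d-1$, $f_i$ is the $O_d(\mathbb C)$-invariant rational function on $V$ with $f_i|_{L^{(i-1)}}=c_{1(d-i+2)}^2+\dots+c_{(d-i+1)(d-i+2)}^2$; $f_d$ is the invariant rational function with $f_d|_{L^{(d-1)}}=c_{12}^2$ (these exist and are unique). $U_d(\mathbb C)$ is the set of points of $V$ in the domain of all $f_k$ with $\prod_kf_k\neq0$, and $U_d(\mathbb R)=U_d(\mathbb C)\cap(\mathbb R^d\oplus\mathfrak{so}(d,\mathbb R))$. An action is free if all stabilizers are trivial. *)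

From HB Require Import structures.
From mathcomp Require Import all_boot all_order all_algebra.
From mathcomp Require Import reals.
From mathcomp Require Import complex.
Set Implicit Arguments. Unset Strict Implicit. Unset Printing Implicit Defensive.
Import Order.TTheory GRing.Theory Num.Theory.
Local Open Scope ring_scope.

(* Ambient points (v, M) with v a column vector in C^d and M a d x d matrix;
   V = C^d (+) so(d,C) is the set of those with M skew-symmetric. *)
Definition pt (C : Type) (d : nat) := ('cV[C]_d * 'M[C]_d)%type.

Definition inV (C : pzRingType) d (x : pt C d) : Prop := x.2^T = - x.2.

Definition act (C : pzRingType) d (A : 'M[C]_d) (x : pt C d) : pt C d :=
  (A *m x.1, A *m x.2 *m A^T).

Definition orth (K : pzRingType) d (A : 'M[K]_d) : Prop := A *m A^T = 1%:M.

(* Polynomial functions in the coordinates c_i = v_i and c_ij = M_ij. *)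
Inductive polyfun (C : pzRingType) (d : nat) : (pt C d -> C) -> Prop :=
| pf_const (c : C) : polyfun (fun _ => c)
| pf_vec (i : 'I_d) : polyfun (fun x => x.1 i ord0)
| pf_mat (i j : 'I_d) : polyfun (fun x => x.2 i j)
| pf_add f g : polyfun f -> polyfun g -> polyfun (fun x => f x + g x)
| pf_mul f g : polyfun f -> polyfun g -> polyfun (fun x => f x * g x).

(* A rational function on V is given by a pair (p, q) of polynomial functions
   with q not identically zero on V (representing p/q). *)
Definition ratfun (C : pzRingType) d (p q : pt C d -> C) : Prop :=
  [/\ polyfun p, polyfun q & exists x, inV x /\ q x != 0].

(* p/q is O_d(C)-invariant: (p/q) o A = p/q as rational functions on V. *)
Definition orth_invariant (C : pzRingType) d (p q : pt C d -> C) : Prop :=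
  forall A : 'M[C]_d, orth A ->
    forall x, inV x -> p (act A x) * q x = p x * q (act A x).

(* Membership in L^{(i)} (1 <= i <= d-1), 0-indexed coordinates:
   c_1 = ... = c_{d-1} = 0, and for 2 <= j <= i, c_{k (d-j+2)} = 0 for
   1 <= k <= d-j. *)
Definition inL (C : pzRingType) d (i : nat) (x : pt C d) : Prop :=
  inV x /\
  (forall k : 'I_d, (k < d.-1)%N -> x.1 k ord0 = 0) /\
  (forall j : nat, (2 <= j <= i)%N ->
     forall k l : 'I_d, (k < d - j)%N -> (l : nat) = (d - j + 1)%N ->
       x.2 k l = 0).

(* The prescribed restriction of f_i to L^{(i-1)} for 2 <= i <= d:
   c_{1 (d-i+2)}^2 + ... + c_{(d-i+1)(d-i+2)}^2  (for i = d this is c_{12}^2). *)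
Definition frestr (C : pzRingType) d (i : nat) (x : pt C d) : C :=
  \sum_(k < d | (k < d - i + 1)%N)
     \sum_(l < d | (l : nat) == (d - i + 1)%N) x.2 k l ^+ 2.

Definition f1 (C : pzRingType) d (x : pt C d) : C :=
  \sum_(i < d) x.1 i ord0 ^+ 2.

(* (p, q) represents f_k (1 <= k <= d):
   - k = 1: p/q = f_1 as rational functions on V;
   - k >= 2: p/q is an O_d(C)-invariant rational function whose restriction
     to L^{(k-1)} is defined and equals frestr k. *)
Definition represents_f (C : pzRingType) d (k : nat) (p q : pt C d -> C)
  : Prop :=
  ratfun p q /\
  if k == 1%N then forall x, inV x -> p x = f1 x * q x
  else [/\ orth_invariant p q,
           (exists x, inL (k.-1) x /\ q x != 0) &
           forall x, inL (k.-1) x -> p x = frestr k x * q x].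

(* U_d(C): points of V in the domain of every f_k with prod_k f_k != 0. *)
Definition inU (C : pzRingType) d (x : pt C d) : Prop :=
  inV x /\
  forall k : nat, (1 <= k <= d)%N ->
    exists p q, [/\ represents_f k p q, q x != 0 & p x != 0].

Definition cplx_pt (R : rcfType) d (x : pt R d) : pt R[i] d :=
  (map_mx (fun r : R => Complex r 0) x.1, map_mx (fun r : R => Complex r 0) x.2).

Definition inUR (R : rcfType) d (x : pt R d) : Prop := inU (cplx_pt x).

(* Householder reflections bring every real point of V, by some orthogonal B,
   into L^{(d-1)}: v on the last axis and M tridiagonal.  For y in L^{(d-1)},
   f_1(y) is the square of the last coordinate of v, and for k >= 2 the
   identity p = f_k q on L^{(k-1)} transports along the orbit to
   p(By) = f_k(y) q(By), where f_k(y) is the square of one superdiagonal entry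
   of M.  The transport holds on all of L^{(k-1)}, not only where q(y) <> 0,
   because on every line of this affine space both sides are polynomials.
   Hence on U_d(R) the last coordinate of v and the whole superdiagonal of M
   are nonzero.  An orthogonal A fixing such a point fixes e_d and commutes
   with M, and going down the superdiagonal it fixes e_{d-1}, ..., e_1. *)

From HB Require Import structures.
From mathcomp Require Import all_boot all_order all_algebra.
From mathcomp Require Import reals complex.
From mathcomp Require Import zify.
Import GRing.Theory Num.Theory.
Local Open Scope ring_scope.
Set Implicit Arguments. Unset Strict Implicit.

Section OrthogonalAction.
Variables (K : comPzRingType) (d : nat).
Implicit Types (A B : 'M[K]_d) (x : pt K d).

Lemma act1 x : act 1%:M x = x.
Proof. by case: x => v M; rewrite /act /= trmx1 !mul1mx mulmx1. Qed.

Lemma act_comp A B x : act A (act B x) = act (A *m B) x.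
Proof. by rewrite /act /= !mulmxA trmx_mul !mulmxA. Qed.

Lemma act_inV A x : inV x -> inV (act A x).
Proof. by rewrite /inV /= => Vx; rewrite !trmx_mul trmxK Vx mulNmx mulmxN mulmxA. Qed.

Lemma orth_tr_mul A : orth A -> A^T *m A = 1%:M.
Proof. exact: mulmx1C. Qed.

Lemma orth_mul A B : orth A -> orth B -> orth (A *m B).
Proof. by move=> oA oB; rewrite /orth trmx_mul mulmxA -(mulmxA A) oB mulmx1 oA. Qed.

Lemma orth_trmx A : orth A -> orth A^T.
Proof. by move=> oA; rewrite /orth trmxK orth_tr_mul. Qed.

Lemma act_orthK A x : orth A -> act A^T (act A x) = x.
Proof. by move=> oA; rewrite act_comp orth_tr_mul // act1. Qed.

Lemma orth_fix_trmx A (X : 'cV[K]_d) : orth A -> A *m X = X -> A^T *m X = X.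
Proof. by move=> oA AX; rewrite -{1}AX mulmxA orth_tr_mul // mul1mx. Qed.

Lemma orth_conj_eq1 A B : orth B -> B *m A *m B^T = 1%:M -> A = 1%:M.
Proof.
move=> oB BAB; have := congr1 (fun M => B^T *m M *m B) BAB.
by rewrite !mulmxA orth_tr_mul // mul1mx -mulmxA orth_tr_mul // mulmx1 mulmx1 orth_tr_mul.
Qed.

End OrthogonalAction.

Section DotProduct.
Variables (K : comPzRingType) (d : nat).
Implicit Types (u w X : 'cV[K]_d) (A : 'M[K]_d) (x : pt K d).

Definition dot u w : K := (u^T *m w) 0 0.

Lemma dotE u w : dot u w = \sum_i u i 0 * w i 0.
Proof. by rewrite /dot mxE; apply: eq_bigr => i _; rewrite mxE. Qed.

Lemma dot_orth A u w : orth A -> dot (A *m u) (A *m w) = dot u w.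
Proof. by move=> oA; rewrite /dot trmx_mul mulmxA -(mulmxA u^T) orth_tr_mul // mulmx1. Qed.

Lemma dotC u w : dot u w = dot w u.
Proof. by rewrite !dotE; apply: eq_bigr => i _; rewrite mulrC. Qed.

Lemma dotBl u w X : dot (u - w) X = dot u X - dot w X.
Proof. by rewrite !dotE -sumrB; apply: eq_bigr => i _; rewrite !mxE mulrBl. Qed.

Lemma dotZl a u X : dot (a *: u) X = a * dot u X.
Proof. by rewrite !dotE mulr_sumr; apply: eq_bigr => i _; rewrite !mxE mulrA. Qed.

Lemma dot_delta (m : 'I_d) X : dot (delta_mx m 0) X = X m 0.
Proof.
rewrite dotE (bigD1 m) //= big1 => [|i im]; rewrite !mxE ?eqxx ?(negbTE im) /=.
  by rewrite mul1r addr0.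
by rewrite mul0r.
Qed.

Lemma f1E x : f1 x = dot x.1 x.1.
Proof. by rewrite dotE. Qed.

Lemma f1_act A x : orth A -> f1 (act A x) = f1 x.
Proof. by move=> oA; rewrite !f1E dot_orth. Qed.

End DotProduct.

Section NormalForms.
Variables (C : pzRingType) (d : nat).
Implicit Types (x y : pt C d).

Lemma inLP j x : inL j x <->
  [/\ inV x, forall k : 'I_d, (k < d.-1)%N -> x.1 k 0 = 0
    & forall k l : 'I_d, (d - j < l)%N -> (k.+1 < l)%N -> x.2 k l = 0].
Proof.
split=> [[Vx [vx Mx]] | [Vx vx Mx]]; split=> //.
  by move=> k l jl kl; have ld := ltn_ord l; apply: (Mx (d - l + 1)%N); lia.
by split=> // j' hj' k l hk hl; have ld := ltn_ord l; apply: Mx; lia.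
Qed.

Lemma inL_mono i j x : (j <= i)%N -> inL i x -> inL j x.
Proof. by move=> ji /inLP[Vx vx Mx]; apply/inLP; split=> // k l lj; apply: Mx; lia. Qed.

Lemma f1_inL j y (r : 'I_d) : inL j y -> r.+1 = d -> f1 y = y.1 r 0 ^+ 2.
Proof.
move=> /inLP[_ vy _] rd; rewrite /f1 (bigD1 r) //= big1 ?addr0 // => k kr.
have kr' : (k : nat) != r := kr; have kd := ltn_ord k.
by rewrite vy ?expr0n //; lia.
Qed.

Lemma frestr_superdiag y (r c : 'I_d) :
  inL d.-1 y -> r.+1 = c :> nat -> frestr (d - r) y = y.2 r c ^+ 2.
Proof.
move=> /inLP[_ _ My] rc; have cd := ltn_ord c.
rewrite /frestr subKn ?addn1 ?rc; last lia.
rewrite (eq_bigr (fun a => y.2 a c ^+ 2)) => [|a _]; last first.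
  by rewrite (big_pred1 c) // => l; rewrite /= -val_eqE.
rewrite (bigD1 r) /=; last lia.
rewrite big1 ?addr0 // => a /andP[ac ar].
have ar' : (a : nat) != r := ar.
by rewrite My ?expr0n //; lia.
Qed.

End NormalForms.

Section Lines.
Variables (C : numDomainType) (d : nat).
Implicit Types (y : pt C d) (f g p q : pt C d -> C).

Definition line y0 y1 (t : C) : pt C d := y0 + t *: (y1 - y0).

Definition poly_on_lines f :=
  forall y0 y1, exists r : {poly C}, forall t, f (line y0 y1 t) = r.[t].

Lemma line0 y0 y1 : line y0 y1 0 = y0.
Proof. by rewrite /line scale0r addr0. Qed.

Lemma line1 y0 y1 : line y0 y1 1 = y1.
Proof. by rewrite /line scale1r addrC subrK. Qed.

Lemma act_line (B : 'M[C]_d) y0 y1 t :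
  act B (line y0 y1 t) = line (act B y0) (act B y1) t.
Proof.
apply: injective_projections => /=; first by rewrite mulmxDr -scalemxAr mulmxBr.
by rewrite mulmxDr mulmxDl -scalemxAr -scalemxAl mulmxBr mulmxBl.
Qed.

Lemma inL_line j y0 y1 t : inL j y0 -> inL j y1 -> inL j (line y0 y1 t).
Proof.
move=> /inLP[V0 v0 M0] /inLP[V1 v1 M1]; apply/inLP; split.
- rewrite /inV in V0 V1 *.
  by rewrite /= linearD linearZ /= linearB /= V0 V1 -opprD scalerN -opprD.
- by move=> k kd; rewrite /= !mxE v0 // v1 // subrr mulr0 addr0.
- by move=> k l jl kl; rewrite /= !mxE M0 // M1 // subrr mulr0 addr0.
Qed.

Lemma poly_on_lines_add f g :
  poly_on_lines f -> poly_on_lines g -> poly_on_lines (fun y => f y + g y).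
Proof.
move=> pf pg y0 y1; have [r rE] := pf y0 y1; have [s sE] := pg y0 y1.
by exists (r + s) => t; rewrite hornerD rE sE.
Qed.

Lemma poly_on_lines_mul f g :
  poly_on_lines f -> poly_on_lines g -> poly_on_lines (fun y => f y * g y).
Proof.
move=> pf pg y0 y1; have [r rE] := pf y0 y1; have [s sE] := pg y0 y1.
by exists (r * s) => t; rewrite hornerM rE sE.
Qed.

Lemma poly_on_lines_opp f : poly_on_lines f -> poly_on_lines (fun y => - f y).
Proof.
by move=> pf y0 y1; have [r rE] := pf y0 y1; exists (- r) => t; rewrite hornerN rE.
Qed.

Lemma poly_on_lines_sum (I : Type) (s : seq I) (P : pred I) (F : I -> pt C d -> C) :
  (forall i, P i -> poly_on_lines (F i)) ->
  poly_on_lines (fun y => \sum_(i <- s | P i) F i y).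
Proof.
move=> pF y0 y1; elim: s => [|i s [r rE]].
  by exists 0 => t; rewrite big_nil horner0.
case Pi: (P i); last by exists r => t; rewrite big_cons Pi rE.
have [ri riE] := pF i Pi y0 y1.
by exists (ri + r) => t; rewrite big_cons Pi hornerD riE rE.
Qed.

Lemma poly_on_lines_act (B : 'M[C]_d) f :
  poly_on_lines f -> poly_on_lines (fun y => f (act B y)).
Proof.
by move=> pf y0 y1; have [r rE] := pf (act B y0) (act B y1); exists r => t; rewrite act_line.
Qed.

Lemma polyfun_on_lines f : polyfun f -> poly_on_lines f.
Proof.
elim=> {f} [c | i | i j | f g _ pf _ pg | f g _ pf _ pg] y0 y1.
- by exists c%:P => t; rewrite hornerC.
- by exists ((y0.1 i 0)%:P + 'X * (y1.1 i 0 - y0.1 i 0)%:P) => t; rewrite /= !mxE !hornerE.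
- by exists ((y0.2 i j)%:P + 'X * (y1.2 i j - y0.2 i j)%:P) => t; rewrite /= !mxE !hornerE.
- exact: poly_on_lines_add.
- exact: poly_on_lines_mul.
Qed.

Lemma frestr_on_lines k : poly_on_lines (@frestr C d k).
Proof.
apply: poly_on_lines_sum => a _; apply: poly_on_lines_sum => l _.
by apply: poly_on_lines_mul; apply/polyfun_on_lines/pf_mat.
Qed.

Lemma poly_eq0_of_horner0 (r : {poly C}) : (forall t, r.[t] = 0) -> r = 0.
Proof.
move=> r0; apply: (@roots_geq_poly_eq0 _ _ [seq i%:R | i <- iota 0 (size r)]).
- by apply/allP => _ /mapP[i _ ->]; apply/eqP/r0.
- by rewrite map_inj_uniq ?iota_uniq // => i j /eqP; rewrite eqr_nat => /eqP.
- by rewrite size_map size_iota.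
Qed.

Lemma poly_on_lines_density (S : pt C d -> Prop) q g y1 :
  (forall y0 y2 t, S y0 -> S y2 -> S (line y0 y2 t)) ->
  poly_on_lines q -> poly_on_lines g -> S y1 -> q y1 != 0 ->
  (forall y, S y -> q y != 0 -> g y = 0) -> forall y, S y -> g y = 0.
Proof.
move=> Sline pq pg Sy1 qy1 gS y Sy.
have [rq rqE] := pq y y1; have [rg rgE] := pg y y1.
have /eqP : rq * rg = 0.
  apply: poly_eq0_of_horner0 => t; rewrite hornerM -rqE -rgE.
  have [->|qt] := eqVneq (q (line y y1 t)) 0; first by rewrite mul0r.
  by rewrite gS ?mulr0 //; apply: Sline.
rewrite mulf_eq0 => /orP[/eqP rq0 | /eqP rg0].
  by move: qy1; rewrite -(line1 y y1) rqE rq0 horner0 eqxx.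
by rewrite -(line0 y y1) rgE rg0 horner0.
Qed.

Lemma represents_f_act k p q (B : 'M[C]_d) y :
  (2 <= k)%N -> represents_f k p q -> orth B -> inL k.-1 y ->
  p (act B y) = frestr k y * q (act B y).
Proof.
move=> k2 [[pp pq _]]; rewrite ifN; last by case: k k2 => [|[]].
case=> inv [y1 [Ly1 qy1]] pE oB Ly; apply/eqP; rewrite -subr_eq0; apply/eqP.
move: y Ly; apply: (poly_on_lines_density _ _ _ Ly1 qy1).
- by move=> y0 y2 t; apply: inL_line.
- exact: polyfun_on_lines.
- apply: poly_on_lines_add; first exact/poly_on_lines_act/polyfun_on_lines.
  apply/poly_on_lines_opp/poly_on_lines_mul; first exact: frestr_on_lines.
  exact/poly_on_lines_act/polyfun_on_lines.
- move=> y Ly qy; apply/eqP; rewrite subr_eq0; apply/eqP/(mulIf qy).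
  by rewrite (inv B oB y Ly.1) pE // mulrAC.
Qed.

End Lines.

Section Householder.
Variables (R : rcfType) (n : nat).
Implicit Types (u w X : 'cV[R]_n).

Lemma dot_ge0 u : 0 <= dot u u.
Proof. by rewrite dotE sumr_ge0 // => i _; exact: sqr_ge0. Qed.

Lemma dot_eq0 u : dot u u = 0 -> u = 0.
Proof.
rewrite dotE => uu0; apply/matrixP => i j; rewrite (ord1 j) mxE.
have := psumr_eq0P (fun k _ => sqr_ge0 (u k 0)) uu0 (i := i) isT.
by move/eqP; rewrite mulf_eq0 orbb => /eqP.
Qed.

Definition householder u : 'M[R]_n := 1%:M - (2 / dot u u) *: (u *m u^T).

Lemma householder_mul u X : householder u *m X = X - (2 / dot u u * dot u X) *: u.
Proof.
rewrite mulmxBl mul1mx -scalemxAl -mulmxA [u^T *m X]mx11_scalar.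
by rewrite mul_mx_scalar scalerA.
Qed.

Lemma householder_sym u : (householder u)^T = householder u.
Proof. by rewrite /householder linearB /= trmx1 linearZ /= trmx_mul trmxK. Qed.

Lemma householder_orth u : orth (householder u).
Proof.
rewrite /orth householder_sym; have [/dot_eq0 u0|uu] := eqVneq (dot u u) 0.
  by rewrite /householder u0 mul0mx scaler0 subr0 mulmx1.
have Hu : householder u *m u = - u.
  by rewrite householder_mul divfK // scaler_nat mulr2n opprD addrA subrr add0r.
by rewrite {2}/householder mulmxBr mulmx1 -scalemxAr mulmxA Hu mulNmx scalerN opprK subrK.
Qed.

Lemma householder_fix u X : dot u X = 0 -> householder u *m X = X.
Proof. by move=> uX; rewrite householder_mul uX mulr0 scale0r subr0. Qed.

Lemma householder_axis w (m : 'I_n) :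
  householder (w - Num.sqrt (dot w w) *: delta_mx m 0) *m w =
  Num.sqrt (dot w w) *: delta_mx m 0.
Proof.
set s := Num.sqrt _; set u := w - _.
have ss : s * s = dot w w by rewrite -expr2 sqr_sqrtr ?dot_ge0.
have uw : dot u w = dot w w - s * w m 0 by rewrite dotBl dotZl dot_delta.
have uu : dot u u = 2 * dot u w.
  rewrite {1}/u dotBl dotZl dot_delta dotC uw !mxE eqxx mulr1 -ss.
  by rewrite mulr2n mulrDl !mul1r mulrBr; congr (_ + _); rewrite opprB addrC.
have [uw0|uw0] := eqVneq (dot u w) 0.
  rewrite householder_fix //; apply/eqP; rewrite -subr_eq0 -/u; apply/eqP.
  by apply: dot_eq0; rewrite uu uw0 mulr0.
rewrite householder_mul uu invfM mulrA divff ?pnatr_eq0 // mul1r mulVf // scale1r.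
by rewrite /u opprB addrC subrK.
Qed.

Lemma householder_tail w (m : 'I_n) :
  (forall r : 'I_n, (m < r)%N -> w r 0 = 0) ->
  exists H, [/\ orth H, forall k : 'I_n, (k < m)%N -> (H *m w) k 0 = 0
    & forall X, (forall r : 'I_n, (r <= m)%N -> X r 0 = 0) -> H *m X = X].
Proof.
move=> w0; exists (householder (w - Num.sqrt (dot w w) *: delta_mx m 0)); split.
- exact: householder_orth.
- move=> k km; rewrite householder_axis !mxE.
  have /negbTE -> : k != m by rewrite -val_eqE /= neq_ltn km.
  by rewrite mulr0.
- move=> X X0; apply: householder_fix; rewrite dotBl dotZl dot_delta X0 // mulr0 subr0.
  by rewrite dotE big1 // => i _; case: (leqP i m) => im; [rewrite X0 ?mulr0 | rewrite w0 ?mul0r].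
Qed.

End Householder.

Section RealNormalForm.
Variables (R : rcfType) (d : nat).
Implicit Types (x y : pt R d).

Lemma inL1_orbit x : (0 < d)%N -> inV x -> exists B, orth B /\ inL 1 (act B x).
Proof.
move=> d0 Vx; have dd : (d.-1 < d)%N by lia.
have [r /= rd|H [oH Hx _]] := @householder_tail _ _ x.1 (Ordinal dd).
  by have := ltn_ord r; lia.
exists H; split=> //; apply/inLP; split=> //; first exact: act_inV.
by move=> k l; have := ltn_ord l; lia.
Qed.

Lemma inL_orbit_succ j y : (0 < j < d.-1)%N -> inL j y ->
  exists H, orth H /\ inL j.+1 (act H y).
Proof.
move=> jd /inLP[Vy vy My].
have ld : (d - j < d)%N by lia.
have md : (d - j.+1 < d)%N by lia.
pose c := Ordinal ld; pose m := Ordinal md.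
have cE : (c : nat) = (d - j)%N by []; have mE : (m : nat) = (d - j.+1)%N by [].
(* Reflecting the part of column [c] above the diagonal onto [e_m] clears
   that column above the superdiagonal and fixes all vectors supported
   below row [m]. *)
pose w : 'cV[R]_d := \col_r (if (r <= m)%N then y.2 r c else 0).
have [r mr|H [oH Hw Hfix]] := @householder_tail _ _ w m.
  by rewrite mxE leqNgt mr.
have Hdelta (l : 'I_d) : (m < l)%N -> H^T *m delta_mx l 0 = delta_mx l 0 :> 'cV_d.
  move=> ml; apply: (orth_fix_trmx oH); apply: Hfix => r rm; rewrite mxE.
  by have /negbTE -> : r != l by rewrite -val_eqE /= neq_ltn (leq_ltn_trans rm ml).
exists H; split=> //; apply/inLP; split; first exact: act_inV.
  by move=> k kd; rewrite /= Hfix ?vy // => r rm; apply: vy; lia.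
move=> k l jl kl; have ml : (m < l)%N by lia.
have entry (A : 'M[R]_d) : A k l = (A *m (delta_mx l 0 : 'cV_d)) k 0.
  by rewrite -colE mxE.
rewrite /= entry -!mulmxA Hdelta // -colE.
case: (ltnP c l) => [cl | lc].
  by rewrite Hfix => [|r rm]; rewrite mxE My //; lia.
have -> : l = c by apply: val_inj => /=; lia.
pose z : 'cV[R]_d := \col_r (if (r <= m)%N then 0 else y.2 r c).
have -> : col c y.2 = w + z.
  by apply/matrixP => r i; rewrite (ord1 i) !mxE; case: ifP; rewrite ?addr0 ?add0r.
have Hz : H *m z = z by apply: Hfix => r rm; rewrite mxE rm.
by rewrite mulmxDr Hz mxE Hw ?mxE ?add0r; [rewrite ifT //; lia | lia].
Qed.

Lemma inL_orbit x : inV x -> forall j, (0 < j < d)%N -> exists B, orth B /\ inL j (act B x).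
Proof.
move=> Vx; elim=> [//|[_ jd | j IH jd]]; first exact: inL1_orbit (ltac:(lia)) Vx.
have /IH [B [oB Ly]] : (0 < j.+1 < d)%N by lia.
have [|H [oH LHy]] := inL_orbit_succ _ Ly; first lia.
by exists (H *m B); rewrite -act_comp; split=> //; apply: orth_mul.
Qed.

End RealNormalForm.

Section Stabilizer.
Variables (K : fieldType) (n : nat).

Lemma fix_tail_span (A : 'M[K]_n) c :
  (forall r : 'I_n, (c <= r)%N -> A *m delta_mx r 0 = delta_mx r 0 :> 'cV_n) ->
  forall X : 'cV_n, (forall r : 'I_n, (r < c)%N -> X r 0 = 0) -> A *m X = X.
Proof.
move=> Afix X X0; rewrite [X]matrix_sum_delta !mulmx_sumr; apply: eq_bigr => i _.
rewrite !big_ord1 -scalemxAr; case: (ltnP i c) => ic; first by rewrite X0 // !scale0r.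
by rewrite Afix.
Qed.

Lemma commute_hessenberg_eq1 (A M : 'M[K]_n) :
  A *m M = M *m A ->
  (forall r c : 'I_n, (r.+1 < c)%N -> M r c = 0) ->
  (forall r c : 'I_n, r.+1 = c :> nat -> M r c != 0) ->
  (forall r : 'I_n, r.+1 = n -> A *m delta_mx r 0 = delta_mx r 0 :> 'cV_n) ->
  A = 1%:M.
Proof.
move=> AM Mband Msuper Alast.
suff Afix t (r : 'I_n) : (n - t.+1 <= r)%N -> A *m delta_mx r 0 = delta_mx r 0 :> 'cV_n.
  apply/matrixP => i j; have := congr1 (fun X : 'cV_n => X i 0) (Afix n j (ltac:(lia))).
  by rewrite -colE !mxE andbT => ->.
elim: t r => [|t IH] r rt; first by apply: Alast; have := ltn_ord r; lia.
case: (leqP (n - t.+1) r) => [|rt']; first exact: IH.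
have cn : (r.+1 < n)%N by lia.
pose c := Ordinal cn; have cE : (c : nat) = r.+1 by [].
have Atail (r' : 'I_n) : (c <= r')%N -> A *m delta_mx r' 0 = delta_mx r' 0 :> 'cV_n.
  by move=> cr'; apply: IH; lia.
(* [M e_c] is [M r c *: e_r] plus a vector supported on rows [>= c]. *)
pose Z : 'cV_n := M *m delta_mx c 0 - M r c *: delta_mx r 0.
have AZ : A *m Z = Z.
  apply: (fix_tail_span Atail) => r' r'c; rewrite /Z -colE !mxE.
  have [->|r'r] := eqVneq r' r; first by rewrite eqxx mulr1 subrr.
  have r'r' : (r' : nat) != r := r'r.
  by rewrite mulr0 subr0 Mband //=; lia.
have AMc : A *m (M *m delta_mx c 0) = M *m delta_mx c 0 :> 'cV_n.
  by rewrite mulmxA AM -mulmxA Atail.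
apply: (scalerI (Msuper r c erefl)); rewrite scalemxAr.
have -> : M r c *: delta_mx r 0 = M *m delta_mx c 0 - Z :> 'cV_n by rewrite /Z opprB addrC subrK.
by rewrite mulmxBr AMc AZ.
Qed.

End Stabilizer.

Lemma inL_stabilizer_trivial (K : fieldType) d (y : pt K d) (A : 'M[K]_d) :
  inL d.-1 y -> (forall r : 'I_d, r.+1 = d -> y.1 r 0 != 0) ->
  (forall r c : 'I_d, r.+1 = c :> nat -> y.2 r c != 0) ->
  orth A -> act A y = y -> A = 1%:M.
Proof.
case: y => v M /inLP[_ /= v0 M0] vlast Msuper oA [Av AM].
apply: (commute_hessenberg_eq1 (M := M)) => //.
- by rewrite -{2}AM -[RHS]mulmxA orth_tr_mul // mulmx1.
- by move=> r c rc; apply: M0 => //; have := ltn_ord c; lia.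
move=> r rd; have vE : v = v r 0 *: delta_mx r 0.
  apply/matrixP => i j; rewrite (ord1 j) !mxE.
  have [->|ir] := eqVneq i r; first by rewrite eqxx mulr1.
  have ir' : (i : nat) != r := ir; have id := ltn_ord i.
  by rewrite mulr0 v0 //; lia.
by apply: (scalerI (vlast r rd)); rewrite scalemxAr -vE.
Qed.

Section NonvanishingOnU.
Variables (C : numDomainType) (d : nat).
Implicit Types (x y : pt C d) (B : 'M[C]_d).

Lemma inU_last_neq0 x y B (r : 'I_d) :
  inU x -> orth B -> x = act B y -> inL d.-1 y -> r.+1 = d -> y.1 r 0 != 0.
Proof.
move=> [Vx xU] oB xE Ly rd; have [p [q [[_ /= pE] _ px]]] := xU 1%N (ltac:(lia)).
move: px; rewrite pE // {1}xE f1_act // (f1_inL Ly rd).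
by rewrite mulf_eq0 sqrf_eq0 negb_or => /andP[].
Qed.

Lemma inU_superdiag_neq0 x y B (r c : 'I_d) :
  inU x -> orth B -> x = act B y -> inL d.-1 y -> r.+1 = c :> nat -> y.2 r c != 0.
Proof.
move=> [_ xU] oB xE Ly rc; have cd := ltn_ord c.
have [p [q [rep _ px]]] := xU (d - r)%N (ltac:(lia)).
have Ly' : inL (d - r).-1 y by apply: inL_mono Ly; lia.
move: px; rewrite xE (represents_f_act _ rep oB Ly') ?(frestr_superdiag Ly rc); last lia.
by rewrite mulf_eq0 sqrf_eq0 negb_or => /andP[].
Qed.

End NonvanishingOnU.

Section Complexification.
Variables (R : rcfType) (d : nat).
Local Notation cplx := (map_mx (real_complex R)).
Implicit Types (x : pt R d) (B : 'M[R]_d).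

Lemma cplx_ptE x : cplx_pt x = (cplx x.1, cplx x.2).
Proof. by []. Qed.

Lemma cplx_act B x : cplx_pt (act B x) = act (cplx B) (cplx_pt x).
Proof. by rewrite !cplx_ptE /act /= !map_mxM map_trmx. Qed.

Lemma orth_cplx B : orth B -> orth (cplx B).
Proof. by move=> oB; rewrite /orth map_trmx -map_mxM oB map_mx1. Qed.

Lemma inV_cplx x : inV (cplx_pt x) -> inV x.
Proof. by rewrite /inV cplx_ptE /= map_trmx -map_mxN => /map_mx_inj. Qed.

Lemma inL_cplx j x : inL j x -> inL j (cplx_pt x).
Proof.
move=> /inLP[Vx vx Mx]; apply/inLP; rewrite cplx_ptE; split=> /=.
- by rewrite /inV /= map_trmx Vx map_mxN.
- by move=> k kd; rewrite mxE vx // rmorph0.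
- by move=> k l jl kl; rewrite mxE Mx // rmorph0.
Qed.

End Complexification.

Theorem corollary3p13 (R : realType) (d : nat) (hd : (2 <= d)%N) :
  forall (x : pt R d), inUR x ->
  forall A : 'M[R]_d, orth A -> act A x = x -> A = 1%:M.
Proof.
move=> x xU A oA Ax.
have [|B [oB Ly]] := inL_orbit (inV_cplx xU.1) (j := d.-1); first lia.
set y := act B x in Ly.
have xE : cplx_pt x = act (map_mx (real_complex R) B^T) (cplx_pt y).
  by rewrite -cplx_act act_orthK.
have oBT := orth_cplx (orth_trmx oB).
have ylast (r : 'I_d) : r.+1 = d -> y.1 r 0 != 0.
  by move=> rd; have := inU_last_neq0 xU oBT xE (inL_cplx Ly) rd; rewrite cplx_ptE mxE fmorph_eq0.
have ysuper (r c : 'I_d) : r.+1 = c :> nat -> y.2 r c != 0.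
  by move=> rc; have := inU_superdiag_neq0 xU oBT xE (inL_cplx Ly) rc; rewrite cplx_ptE mxE fmorph_eq0.
apply: (orth_conj_eq1 oB); apply: (inL_stabilizer_trivial Ly ylast ysuper).
  exact: orth_mul (orth_mul oB oA) (orth_trmx oB).
by rewrite -!act_comp act_orthK // Ax.
Qed.
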